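(* Consider the discrete-time logical system $x(k+1)=f(x(k),u(k))$ with $f:\mathbb{B}^{n_x}\times\mathbb{B}^{n_u}\to\mathbb{B}^{n_x}$, where $f$ is given by an expression whose leaves are $Px$, $Qu$ (for fixed selection matrices $P,Q$ with $0/1$ entries, products over $\mathrm{GF}(2)$) or constant binary vectors, and whose internal nodes are componentwise XOR, XNOR, NOT, AND, NAND, OR or NOR between subexpressions of equal dimension. Let $\hat{\mathcal{R}}_0$ be a logical zonotope with $\mathcal{X}_0\subseteq\hat{\mathcal{R}}_0$, and let $\mathcal{U}_k\subseteq\mathbb{B}^{n_u}$ be logical zonotopes for $k\ge0$. Define $\hat{\mathcal{R}}_{k+1}=f(\hat{\mathcal{R}}_k,\mathcal{U}_k)$, where the expression of $f$ is evaluated on logical zonotopes by replacing each leaf $Px$ by $\langle Pc,PG\rangle$ for $\hat{\mathcal{R}}_k=\langle c,G\rangle$ (similarly $Qu$ using $\mathcal{U}_k$), each constant $v$ by $\langle v,[\,]\rangle$, and each operation by its logical-zonotope counterpart: XOR by $\langle c_1\oplus c_2,[G_1,G_2]\rangle$; NOT by $\langle c\oplus\mathbf{1},G\rangle$; XNOR by NOT of XOR; AND by $\langle c_\wedge,G_\wedge\rangle$ with $c_\wedge=c_1c_2$, $G_\wedge=[c_1g_{2,1},\dots,c_1g_{2,\gamma_2},c_2g_{1,1},\dots,c_2g_{1,\gamma_1},g_{1,1}g_{2,1},\dots,g_{1,\gamma_1}g_{2,\gamma_2}]$; NAND by NOT of AND; OR of $\mathcal{L}_1,\mathcal{L}_2$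 by NAND of $\neg\mathcal{L}_1,\neg\mathcal{L}_2$; NOR by NOT of OR. Then for every $N\ge0$, $\hat{\mathcal{R}}_N\supseteq\mathcal{R}_N$, the exact reachable set.
   Context: $\mathbb{B}=\{0,1\}$; $\mathbf{1}$ is the all-ones vector; for binary vectors $\oplus$ is componentwise XOR, $\neg$ negation, $\vee$ OR and juxtaposition $ab$ componentwise AND; for $g\in\mathbb{B}^n$, $\beta\in\mathbb{B}$, $g\beta$ is $g$ if $\beta=1$ and $0$ otherwise. A logical zonotope is $\langle c,G\rangle=\{x\in\mathbb{B}^n: x=c\oplus g_1\beta_1\oplus\cdots\oplus g_\gamma\beta_\gamma,\ \beta_i\in\{0,1\}\}$ for $c\in\mathbb{B}^n$, $G=[g_1,\dots,g_\gamma]\in\mathbb{B}^{n\times\gamma}$; in the operations above $\mathcal{L}_i=\langle c_i,G_i\rangle$ with $G_i=[g_{i,1},\dots,g_{i,\gamma_i}]$. The exact reachable set after $N$ steps from initial set $\mathcal{X}_0\subseteq\mathbb{B}^{n_x}$ with inputs $u(k)\in\mathcal{U}_k$ is $\mathcal{R}_N=\{x(N): x(0)\in\mathcal{X}_0,\ u(k)\in\mathcal{U}_k,\ x(k+1)=f(x(k),u(k))\ \forall k\in\{0,\dots,N-1\}\}$, with $\mathcal{R}_0=\mathcal{X}_0$. *)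

From mathcomp Require Import all_boot.
Set Implicit Arguments. Unset Strict Implicit. Unset Printing Implicit Defensive.

Definition bvec (n : nat) := 'I_n -> bool.

Definition bxor n (a b : bvec n) : bvec n := fun i => a i (+) b i.
Definition band n (a b : bvec n) : bvec n := fun i => a i && b i.
Definition bones n : bvec n := fun _ => true.
Definition bzero n : bvec n := fun _ => false.

Definition bmul m n (P : 'I_m -> 'I_n -> bool) (x : bvec n) : bvec m :=
  fun i => \big[addb/false]_(j < n) (P i j && x j).

Record lzono (n : nat) := LZ { zc : bvec n; zG : seq (bvec n) }.

Definition zmem n (Z : lzono n) (x : bvec n) : Prop :=
  exists beta : 'I_(size (zG Z)) -> bool,
    forall i, x i = zc Z i (+)
      \big[addb/false]_(k < size (zG Z)) (nth (@bzero n) (zG Z) k i && beta k).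

Definition zxor n (Z1 Z2 : lzono n) : lzono n :=
  LZ (bxor (zc Z1) (zc Z2)) (zG Z1 ++ zG Z2).
Definition znot n (Z : lzono n) : lzono n :=
  LZ (bxor (zc Z) (@bones n)) (zG Z).
Definition zand n (Z1 Z2 : lzono n) : lzono n :=
  LZ (band (zc Z1) (zc Z2))
     ([seq band (zc Z1) g | g <- zG Z2] ++
      [seq band (zc Z2) g | g <- zG Z1] ++
      [seq band g1 g2 | g1 <- zG Z1, g2 <- zG Z2]).
Definition zxnor n (Z1 Z2 : lzono n) := znot (zxor Z1 Z2).
Definition znand n (Z1 Z2 : lzono n) := znot (zand Z1 Z2).
Definition zor n (Z1 Z2 : lzono n) := znand (znot Z1) (znot Z2).
Definition znor n (Z1 Z2 : lzono n) := znot (zor Z1 Z2).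
Definition zlin m n (P : 'I_m -> 'I_n -> bool) (Z : lzono n) : lzono m :=
  LZ (bmul P (zc Z)) [seq bmul P g | g <- zG Z].
Definition zconst n (v : bvec n) : lzono n := LZ v [::].

Inductive lexpr (nx nu : nat) : nat -> Type :=
| EX m (P : 'I_m -> 'I_nx -> bool) : lexpr nx nu m
| EU m (Q : 'I_m -> 'I_nu -> bool) : lexpr nx nu m
| EC m (v : bvec m) : lexpr nx nu m
| EXor m (a b : lexpr nx nu m) : lexpr nx nu m
| EXnor m (a b : lexpr nx nu m) : lexpr nx nu m
| ENot m (a : lexpr nx nu m) : lexpr nx nu m
| EAnd m (a b : lexpr nx nu m) : lexpr nx nu m
| ENand m (a b : lexpr nx nu m) : lexpr nx nu m
| EOr m (a b : lexpr nx nu m) : lexpr nx nu m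
| ENor m (a b : lexpr nx nu m) : lexpr nx nu m.

Fixpoint evalb nx nu m (e : lexpr nx nu m) (x : bvec nx) (u : bvec nu) : bvec m :=
  match e with
  | EX _ P => bmul P x
  | EU _ Q => bmul Q u
  | EC _ v => v
  | EXor _ a b => fun i => evalb a x u i (+) evalb b x u i
  | EXnor _ a b => fun i => ~~ (evalb a x u i (+) evalb b x u i)
  | ENot _ a => fun i => ~~ evalb a x u i
  | EAnd _ a b => fun i => evalb a x u i && evalb b x u i
  | ENand _ a b => fun i => ~~ (evalb a x u i && evalb b x u i)
  | EOr _ a b => fun i => evalb a x u i || evalb b x u i
  | ENor _ a b => fun i => ~~ (evalb a x u i || evalb b x u i)
  end.

Fixpoint evalz nx nu m (e : lexpr nx nu m) (X : lzono nx) (U : lzono nu) : lzono m :=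
  match e with
  | EX _ P => zlin P X
  | EU _ Q => zlin Q U
  | EC _ v => zconst v
  | EXor _ a b => zxor (evalz a X U) (evalz b X U)
  | EXnor _ a b => zxnor (evalz a X U) (evalz b X U)
  | ENot _ a => znot (evalz a X U)
  | EAnd _ a b => zand (evalz a X U) (evalz b X U)
  | ENand _ a b => znand (evalz a X U) (evalz b X U)
  | EOr _ a b => zor (evalz a X U) (evalz b X U)
  | ENor _ a b => znor (evalz a X U) (evalz b X U)
  end.

Definition reach nx nu (f : lexpr nx nu nx) (X0 : bvec nx -> Prop)
    (Us : nat -> bvec nu -> Prop) (N : nat) (x : bvec nx) : Prop :=
  exists (xs : nat -> bvec nx) (us : nat -> bvec nu),
    [/\ X0 (xs 0%N),
        (forall k, k < N -> Us k (us k)),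
        (forall k, k < N -> xs k.+1 = evalb f (xs k) (us k))
      & x = xs N].

Fixpoint Rhat nx nu (f : lexpr nx nu nx) (R0 : lzono nx) (U : nat -> lzono nu)
    (k : nat) : lzono nx :=
  match k with
  | 0 => R0
  | k'.+1 => evalz f (Rhat f R0 U k') (U k')
  end.

From mathcomp Require Import all_boot.
Set Implicit Arguments. Unset Strict Implicit.

(* Each zonotope operation is exact on generator combinations: the xor of two
   combinations is a combination of the concatenated generators, and the and of
   c1 + G1 b1 with c2 + G2 b2 expands to c1 c2 + c1 G2 b2 + c2 G1 b1 + (G1 b1)(G2 b2),
   whose last term is a combination of the pairwise products g1 g2. Hence the
   zonotope evaluation of an expression contains the boolean evaluation of any
   of its members, and an induction on the number of steps bounds R_N. *)

Fixpoint gcomb n (G : seq (bvec n)) (b : nat -> bool) (i : 'I_n) : bool :=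
  if G is g :: G' then (g i && b 0) (+) gcomb G' (fun k => b k.+1) i else false.

(* Coefficients indexed by [nat] rather than ['I_(size G)], so that they can be
   spliced along concatenations of generator lists. *)
Definition zmem_nat n (Z : lzono n) (x : bvec n) : Prop :=
  exists b : nat -> bool, forall i, x i = zc Z i (+) gcomb (zG Z) b i.

Definition bcat (n : nat) (b1 b2 : nat -> bool) (k : nat) : bool :=
  if k < n then b1 k else b2 (k - n).

Lemma eq_gcomb n (G : seq (bvec n)) b b' i :
  b =1 b' -> gcomb G b i = gcomb G b' i.
Proof.
elim: G b b' => [//|g G IH] b b' eq_b /=.
by rewrite eq_b (IH _ (fun k => b' k.+1)).
Qed.

Lemma big_gcomb n (G : seq (bvec n)) (b : nat -> bool) i :
  \big[addb/false]_(k < size G) (nth (@bzero n) G k i && b k) = gcomb G b i.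
Proof.
elim: G b => [|g G IH] b /=; first by rewrite big_ord0.
by rewrite big_ord_recl -IH.
Qed.

Lemma zmemE n (Z : lzono n) x : zmem Z x <-> zmem_nat Z x.
Proof.
split=> [[beta Hx]|[b Hx]]; last by exists (fun k => b k) => i; rewrite Hx -big_gcomb.
exists (fun k => oapp beta false (insub k)) => i.
rewrite Hx -big_gcomb; congr (_ (+) _); apply: eq_bigr => k _.
by rewrite valK.
Qed.

Lemma zmem_nat_ext n (Z : lzono n) x y : x =1 y -> zmem_nat Z x -> zmem_nat Z y.
Proof. by move=> eq_xy [b Hx]; exists b => i; rewrite -eq_xy. Qed.

Lemma gcomb_cat n (G1 G2 : seq (bvec n)) b1 b2 i :
  gcomb (G1 ++ G2) (bcat (size G1) b1 b2) i = gcomb G1 b1 i (+) gcomb G2 b2 i.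
Proof.
elim: G1 b1 => [|g G1 IH] b1 /=; first by apply: eq_gcomb => k; rewrite /bcat subn0.
rewrite (@eq_gcomb _ _ _ (bcat (size G1) (fun k => b1 k.+1) b2)) ?IH ?addbA //.
Qed.

Lemma gcomb_mapl n (c : bvec n) G b i :
  gcomb [seq band c g | g <- G] b i = c i && gcomb G b i.
Proof.
elim: G b => [|g G IH] b /=; first by rewrite andbF.
by rewrite IH andb_addr andbA.
Qed.

Lemma gcomb_andr n (G : seq (bvec n)) b c i :
  gcomb G (fun k => b k && c) i = gcomb G b i && c.
Proof. by elim: G b => [//|g G IH] b /=; rewrite IH andb_addl andbA. Qed.

Lemma gcomb_allpairs n (G1 G2 : seq (bvec n)) b1 b2 :
  exists b, forall i, gcomb [seq band g1 g2 | g1 <- G1, g2 <- G2] b i =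
                      gcomb G1 b1 i && gcomb G2 b2 i.
Proof.
elim: G1 b1 => [|g G1 IH] b1 /=; first by exists b1.
have [b Hb] := IH (fun k => b1 k.+1).
exists (bcat (size [seq band g g2 | g2 <- G2]) (fun k => b2 k && b1 0) b) => i.
by rewrite gcomb_cat Hb gcomb_mapl gcomb_andr andb_addl andbA andbAC.
Qed.

Lemma bmul_xor m n (P : 'I_m -> 'I_n -> bool) x y i :
  bmul P (bxor x y) i = bmul P x i (+) bmul P y i.
Proof. by rewrite /bmul /bxor -big_split; apply: eq_bigr => j _; rewrite andb_addr. Qed.

Lemma bmul_andr m n (P : 'I_m -> 'I_n -> bool) x c i :
  bmul P (fun j => x j && c) i = bmul P x i && c.
Proof.
rewrite /bmul; case: c; first by rewrite andbT; apply: eq_bigr => j _; rewrite andbT.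
by rewrite andbF; apply: big1 => j _; rewrite !andbF.
Qed.

Lemma gcomb_map_bmul m n (P : 'I_m -> 'I_n -> bool) G b i :
  gcomb [seq bmul P g | g <- G] b i = bmul P (gcomb G b) i.
Proof.
elim: G b => [|g G IH] b /=; last by rewrite IH -bmul_andr -bmul_xor.
by rewrite /bmul big1 // => j _; rewrite andbF.
Qed.

Lemma zmem_const n (v : bvec n) : zmem_nat (zconst v) v.
Proof. by exists (fun _ => false) => i; rewrite addbF. Qed.

Lemma zmem_lin m n (P : 'I_m -> 'I_n -> bool) Z x :
  zmem_nat Z x -> zmem_nat (zlin P Z) (bmul P x).
Proof.
move=> [b Hx]; exists b => i /=; rewrite gcomb_map_bmul -bmul_xor.
by apply: eq_bigr => j _; rewrite Hx.
Qed.

Lemma zmem_xor n (Z1 Z2 : lzono n) x y :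
  zmem_nat Z1 x -> zmem_nat Z2 y -> zmem_nat (zxor Z1 Z2) (bxor x y).
Proof.
move=> [b1 Hx] [b2 Hy]; exists (bcat (size (zG Z1)) b1 b2) => i /=.
rewrite gcomb_cat /bxor Hx Hy.
by rewrite -!addbA (addbCA (gcomb _ b1 i)).
Qed.

Lemma zmem_not n (Z : lzono n) x : zmem_nat Z x -> zmem_nat (znot Z) (fun i => ~~ x i).
Proof. by move=> [b Hx]; exists b => i; rewrite Hx /bxor /bones addbAC addbT. Qed.

Lemma zmem_and n (Z1 Z2 : lzono n) x y :
  zmem_nat Z1 x -> zmem_nat Z2 y -> zmem_nat (zand Z1 Z2) (band x y).
Proof.
move=> [b1 Hx] [b2 Hy]; have [b Hb] := gcomb_allpairs (zG Z1) (zG Z2) b1 b2.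
exists (bcat (size [seq band (zc Z1) g | g <- zG Z2]) b2
          (bcat (size [seq band (zc Z2) g | g <- zG Z1]) b1 b)) => i /=.
rewrite !gcomb_cat Hb !gcomb_mapl /band Hx Hy.
by case: (zc Z1 i); case: (zc Z2 i);
   case: (gcomb (zG Z1) b1 i); case: (gcomb (zG Z2) b2 i).
Qed.

Lemma zmem_or n (Z1 Z2 : lzono n) x y :
  zmem_nat Z1 x -> zmem_nat Z2 y -> zmem_nat (zor Z1 Z2) (fun i => x i || y i).
Proof.
move=> Hx Hy; apply: zmem_nat_ext (zmem_not (zmem_and (zmem_not Hx) (zmem_not Hy))).
by move=> i; rewrite /band negb_and !negbK.
Qed.

Lemma zmem_evalz nx nu m (e : lexpr nx nu m) X U x u :
  zmem_nat X x -> zmem_nat U u -> zmem_nat (evalz e X U) (evalb e x u).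
Proof.
move=> Hx Hu; elim: e => {m} /= [m P|m Q|m v|m a Ha b Hb|m a Ha b Hb|m a Ha
  |m a Ha b Hb|m a Ha b Hb|m a Ha b Hb|m a Ha b Hb].
- exact: zmem_lin.
- exact: zmem_lin.
- exact: zmem_const.
- exact: zmem_xor.
- exact: zmem_not (zmem_xor Ha Hb).
- exact: zmem_not.
- exact: zmem_and.
- exact: zmem_not (zmem_and Ha Hb).
- exact: zmem_or.
- exact: zmem_not (zmem_or Ha Hb).
Qed.

Theorem theorem1 (nx nu : nat) (f : lexpr nx nu nx) (X0 : bvec nx -> Prop)
    (R0 : lzono nx) (U : nat -> lzono nu) :
  (forall x, X0 x -> zmem R0 x) ->
  forall (N : nat) (x : bvec nx),
    reach f X0 (fun k => zmem (U k)) N x -> zmem (Rhat f R0 U N) x.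
Proof.
move=> X0_R0 N x [xs [us [X0_xs0 U_us step ->]]]; apply/zmemE.
suff: forall k, k <= N -> zmem_nat (Rhat f R0 U k) (xs k) by apply.
elim=> [_|k IH lt_kN] /=; first exact/zmemE/X0_R0.
by rewrite step //; apply: zmem_evalz (IH (ltnW lt_kN)) _; apply/zmemE/U_us.
Qed.
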